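(* Let $(\Omega,\Sigma,\mathbb{P})$ be a probability space, let $X$ be an ideal of $L_0(\Sigma)$, and let $Y$ be a sublattice of $X$ such that the constant function $\mathbb 1\in Y$. Then the following are equivalent: (a) $Y$ is order closed in $X$; (b) $Y=L_0(\sigma(Y))\cap X$.
   Context: $L_0(\Sigma)$ denotes the vector lattice of all real-valued $\Sigma$-measurable functions modulo a.e. equality, with the a.e. pointwise order. An ideal of $L_0(\Sigma)$ is a vector subspace $X$ such that $|x|\le|y|$ a.e. and $y\in X$ imply $x\in X$. A sublattice is a vector subspace closed under $y\mapsto|y|$. A net $(x_\alpha)$ converges in order to $x$ in $X$ if there is a net $(z_\beta)$ in $X$ with $z_\beta\downarrow 0$ such that for every $\beta$ there is $\alpha_0$ with $|x_\alpha-x|\le z_\beta$ for all $\alpha\ge\alpha_0$; a subset $A\subset X$ is order closed if it contains every order limit in $X$ of nets from $A$. For $Y\subset L_0(\Sigma)$, $\sigma(Y)$ is the smallest sub-$\sigma$-algebra of $\Sigma$ which makes all members of $Y$ measurable and contains all $\mathbb{P}$-null sets, and $L_0(\sigma(Y))$ is the set of functions in $L_0(\Sigma)$ measurable with respect to $\sigma(Y)$. *)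

From HB Require Import structures.
From mathcomp Require Import all_boot all_order all_algebra.
From mathcomp Require Import all_classical all_reals all_analysis.
Set Implicit Arguments.
Unset Strict Implicit.
Unset Printing Implicit Defensive.
Import Order.TTheory GRing.Theory Num.Theory.
Local Open Scope classical_set_scope.
Local Open Scope ring_scope.

(* Encoding of L_0(Sigma): an element of L_0(Sigma) is represented by any of
   its Sigma-measurable representatives T -> R; a subset of L_0(Sigma) is
   represented by the set of all representatives of its members, i.e. by a
   set of measurable functions closed under a.e. equality. *)

Section L0.
Context {d : measure_display} {T : measurableType d} {R : realType}.
Variable mu : probability T R.

Definition ae_le (f g : T -> R) : Prop := {ae mu, forall x, f x <= g x}.

Definition L0set (A : set (T -> R)) : Prop :=
  (forall f, A f -> measurable_fun setT f) /\
  (forall f g, A f -> measurable_fun setT g ->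
     {ae mu, forall x, f x = g x} -> A g).

Definition vsubspace (A : set (T -> R)) : Prop :=
  A (fun _ => 0) /\
  (forall f g, A f -> A g -> A (fun x => f x + g x)) /\
  (forall (c : R) f, A f -> A (fun x => c * f x)).

Definition ideal (X : set (T -> R)) : Prop :=
  L0set X /\ vsubspace X /\
  (forall (f g : T -> R), measurable_fun setT f -> X g ->
     ae_le (fun x => `|f x|) (fun x => `|g x|) -> X f).

Definition sublattice (X Y : set (T -> R)) : Prop :=
  L0set Y /\ Y `<=` X /\ vsubspace Y /\
  (forall f, Y f -> Y (fun x => `|f x|)).

Definition directed (I : Type) (le : I -> I -> Prop) : Prop :=
  inhabited I /\
  (forall i, le i i) /\
  (forall i j k, le i j -> le j k -> le i k) /\
  (forall i j, exists k, le i k /\ le j k).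

Definition decr_to_zero (X : set (T -> R)) (J : Type) (leJ : J -> J -> Prop)
  (z : J -> T -> R) : Prop :=
  (forall b b', leJ b b' -> ae_le (z b') (z b)) /\
  (forall b, ae_le (fun _ => 0) (z b)) /\
  (forall w, X w -> (forall b, ae_le w (z b)) -> ae_le w (fun _ => 0)).

Definition order_conv (X : set (T -> R)) (I : Type) (leI : I -> I -> Prop)
  (xn : I -> T -> R) (x0 : T -> R) : Prop :=
  exists (J : Type) (leJ : J -> J -> Prop) (z : J -> T -> R),
    directed leJ /\ (forall b, X (z b)) /\ decr_to_zero X leJ z /\
    forall b, exists a0, forall a, leI a0 a ->
      ae_le (fun x => `|xn a x - x0 x|) (z b).

Definition order_closed (X A : set (T -> R)) : Prop :=
  forall (I : Type) (leI : I -> I -> Prop) (xn : I -> T -> R) (x0 : T -> R),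
    directed leI -> (forall a, A (xn a)) -> X x0 ->
    order_conv X leI xn x0 -> A x0.

Definition sigmaY (Y : set (T -> R)) : set (set T) :=
  <<s setT,
    [set A | exists f (B : set R), Y f /\ measurable B /\ A = f @^-1` B] `|`
    [set N | measurable N /\ mu N = 0%E] >>.

Definition L0_of (G : set (set T)) : set (T -> R) :=
  [set f | measurable_fun setT f /\
           forall B : set R, measurable B -> G (f @^-1` B)].

End L0.

(* (a) -> (b): order closedness makes Y stable under increasing pointwise limits
   that stay in X.  Hence the measurable sets whose indicator lies in Y form a
   sigma-algebra; it contains the null sets and the sets [f > c] for f in Y,
   hence all of sigma(Y).  A nonnegative f in L_0(sigma(Y)) /\ X is then an
   increasing limit of sigma(Y)-simple functions, so it lies in Y, and so does
   f = f^+ - f^-.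
   (b) -> (a): if z_b decreases to 0 in X, the integrals of min(z_b^+, 1)
   decrease along the directed index set.  Along a sequence b_n on which they
   tend to their infimum, the limit v of min(z_(b_n)^+, 1) lies a.e. below every
   z_b, hence v = 0 and z_(b_n) -> 0 a.e.  An order limit of a net of Y is thus
   an a.e. limit of a sequence of Y, and L_0(sigma(Y)) is closed under a.e.
   limits because sigma(Y) contains the null sets. *)

From mathcomp Require Import all_boot all_order all_algebra.
From mathcomp Require Import all_classical all_reals all_analysis.
From mathcomp Require Import measurable_realfun lra.
Set Implicit Arguments.
Unset Strict Implicit.
Unset Printing Implicit Defensive.
Import Order.TTheory GRing.Theory Num.Theory numFieldNormedType.Exports.
Import HBSimple HBNNSimple.
Local Open Scope classical_set_scope.
Local Open Scope ring_scope.

Section vector_lattice.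
Context {d : measure_display} {T : measurableType d} {R : realType}.
Variable A : set (T -> R).
Hypothesis subA : vsubspace A.

Lemma vsubspace0 : A (fun _ => 0).
Proof. by case: subA. Qed.

Lemma vsubspaceD f g : A f -> A g -> A (fun x => f x + g x).
Proof. by case: subA => _ [+ _]; apply. Qed.

Lemma vsubspaceZ c f : A f -> A (fun x => c * f x).
Proof. by case: subA => _ [_]; apply. Qed.

Lemma vsubspaceB f g : A f -> A g -> A (fun x => f x - g x).
Proof.
move=> Af Ag; have := vsubspaceD Af (vsubspaceZ (-1) Ag).
by under eq_fun do rewrite mulN1r.
Qed.

Lemma vsubspace_cst c : A (fun _ => 1) -> A (fun _ => c).
Proof. by move/(vsubspaceZ c); under eq_fun do rewrite mulr1. Qed.

Lemma vsubspace_sum n (F : 'I_n -> T -> R) :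
  (forall i, A (F i)) -> A (fun x => \sum_(i < n) F i x).
Proof.
elim: n F => [|n IH] F AF; first by under eq_fun do rewrite big_ord0; exact: vsubspace0.
under eq_fun do rewrite big_ord_recr /=.
by apply: vsubspaceD; [exact: (IH (fun i => F (widen_ord (leqnSn n) i)))|].
Qed.

Hypothesis absA : forall f, A f -> A (fun x => `|f x|).

Lemma vsubspace_max f g : A f -> A g -> A (fun x => Num.max (f x) (g x)).
Proof.
move=> Af Ag.
have := vsubspaceZ 2^-1 (vsubspaceD (vsubspaceD Af Ag) (absA (vsubspaceB Af Ag))).
by under eq_fun do rewrite mulrC -maxr_absE.
Qed.

Lemma vsubspace_min f g : A f -> A g -> A (fun x => Num.min (f x) (g x)).
Proof.
move=> Af Ag; have := vsubspaceB (vsubspaceD Af Ag) (vsubspace_max Af Ag).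
by under eq_fun => x do rewrite -(addr_min_max (f x)) addrK.
Qed.

End vector_lattice.

Lemma nat_directed : directed (fun n m : nat => (n <= m)%N).
Proof.
split; first exact: inhabits 0%N.
split; first by [].
split; first by move=> i j k; exact: leq_trans.
by move=> i j; exists (maxn i j); rewrite leq_maxl leq_maxr.
Qed.

Section ideal.
Context {d : measure_display} {T : measurableType d} {R : realType}.
Variables (mu : probability T R) (X : set (T -> R)).
Hypothesis hX : ideal mu X.
Implicit Types f g : T -> R.

Lemma ideal_measurable f : X f -> measurable_fun setT f.
Proof. by case: hX => -[+ _] _; apply. Qed.

Lemma ideal_vsubspace : vsubspace X.
Proof. by case: hX => _ []. Qed.

Lemma ideal_le f g : measurable_fun setT f -> X g ->
  (forall x, `|f x| <= `|g x|) -> X f.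
Proof. by case: hX => _ [_ dom] mf Xg fg; apply: (dom f g mf Xg); exact: aeW. Qed.

Variable A : set (T -> R).
Hypotheses (AX : A `<=` X) (Aoc : order_closed mu X A).

Lemma order_closed_nondecreasing_limit (s : nat -> T -> R) f :
  (forall n, A (s n)) -> X f ->
  (forall x, {homo s ^~ x : n m / (n <= m)%N >-> n <= m}) ->
  (forall x, s n x @[n --> \oo] --> f x) -> A f.
Proof.
move=> As Xf s_nd s_cvg.
have s_le n x : s n x <= f x.
  rewrite -(cvg_lim _ (s_cvg x)) //; exact: nondecreasing_cvgn_le (cvgP _ (s_cvg x)) n.
apply: (Aoc nat_directed As Xf).
exists nat, (fun n m => (n <= m)%N), (fun n x => f x - s n x).
split; first exact: nat_directed.
split; first by move=> n; apply: (vsubspaceB ideal_vsubspace) => //; exact: AX.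
split; first split.
- by move=> n m nm; apply: aeW => x; have := s_nd x n m nm; lra.
- split; first by move=> n; apply: aeW => x; rewrite subr_ge0.
  move=> w _ /ae_foralln; apply: filterS => x w_le.
  have cvg0 : (fun n => f x - s n x) @ \oo --> (0 : R).
    by rewrite -(subrr (f x)); apply: cvgB; [exact: cvg_cst|exact: s_cvg].
  rewrite -(cvg_lim _ cvg0) //; apply: limr_ge; first exact: cvgP cvg0.
  exact: nearW.
- move=> n; exists n => m nm; apply: aeW => x.
  by rewrite distrC ger0_norm ?subr_ge0 //; have := s_nd x n m nm; lra.
Qed.

End ideal.

Lemma indic_le (T : Type) (R : realType) (A B : set T) x :
  A `<=` B -> \1_A x <= \1_B x :> R.
Proof.
move=> AB; rewrite !indicE; have [/set_mem/AB Bx|_] := boolP (x \in A).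
  by rewrite mem_set.
by rewrite ler0n.
Qed.

Section indicator_sets.
Context {d : measure_display} {T : measurableType d} {R : realType}.
Variables (mu : probability T R) (X Y : set (T -> R)).
Hypotheses (hX : ideal mu X) (hY : sublattice mu X Y) (Y1 : Y (fun _ => 1)).
Hypothesis Yoc : order_closed mu X Y.
Implicit Types (f : T -> R) (A : set T).

Lemma sublattice_vsubspace : vsubspace Y.
Proof. by case: hY => _ [_ []]. Qed.

Lemma sublattice_abs f : Y f -> Y (fun x => `|f x|).
Proof. by case: hY => _ [_ [_]]; apply. Qed.

Lemma sublattice_sub : Y `<=` X.
Proof. by case: hY => _ []. Qed.

Lemma sublattice_ae f g : Y f -> measurable_fun setT g ->
  {ae mu, forall x, f x = g x} -> Y g.
Proof. by case: hY => -[_ ae_closed] _; exact: ae_closed. Qed.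

Let X_indic A : measurable A -> X \1_A.
Proof.
move=> mA; apply: (ideal_le hX (measurable_indic mA) (sublattice_sub Y1)) => x.
by rewrite normr1 indicE normr_nat lern1 leq_b1.
Qed.

Definition indic_sets := [set A | measurable A /\ Y \1_A].

Lemma indic_sets0 : indic_sets set0.
Proof. by split=> //; rewrite indic0; exact: vsubspace0 sublattice_vsubspace. Qed.

Lemma indic_setsC A : indic_sets A -> indic_sets (setT `\` A).
Proof.
move=> [mA YA]; split; first exact: measurableD.
have := vsubspaceB sublattice_vsubspace Y1 YA.
congr Y; apply/funext => x; rewrite setTD indicC indicE.
by case: (x \in A); rewrite ?subrr ?subr0.
Qed.

Lemma indic_setsU A B : indic_sets A -> indic_sets B -> indic_sets (A `|` B).
Proof.
move=> [mA YA] [mB YB]; split; first exact: measurableU.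
have := vsubspace_max sublattice_vsubspace sublattice_abs YA YB.
congr Y; apply/funext => x; rewrite !indicE in_setU.
by case: (x \in A); case: (x \in B); rewrite /= ?maxxx ?(max_r ler01) ?(max_l ler01).
Qed.

Lemma indic_sets_bigcup_nondecreasing (U : (set T)^nat) :
  (forall n, indic_sets (U n)) -> {homo U : n m / (n <= m)%N >-> n `<=` m} ->
  indic_sets (\bigcup_n U n).
Proof.
move=> YU U_nd; have mU : measurable (\bigcup_n U n).
  by apply: bigcupT_measurable => n; case: (YU n).
split => //; apply: (order_closed_nondecreasing_limit hX sublattice_sub Yoc
  (s := fun n => \1_(U n))).
- by move=> n; case: (YU n).
- exact: X_indic.
- by move=> x n m nm; apply: indic_le; exact: U_nd.
move=> x; apply: cvg_near_cst; have [[k _ Ukx]|Ux] := pselect ((\bigcup_n U n) x).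
  near=> n; rewrite !indicE !mem_set //; first by exists k.
  by apply: (U_nd k) => //; near: n; exact: nbhs_infty_ge.
by apply: nearW => n; rewrite !indicE !memNset // => Unx; apply: Ux; exists n.
Unshelve. all: by end_near.
Qed.

Lemma indic_sets_sigma_algebra : sigma_algebra setT indic_sets.
Proof.
split; [exact: indic_sets0|exact: indic_setsC|move=> F YF].
rewrite -bigcup_bigsetU_bigcup; apply: indic_sets_bigcup_nondecreasing; last first.
  by move=> n m nm; apply: subset_bigsetU.
by elim=> [|n IH]; rewrite ?big_ord1 // big_ord_recr /=; exact: indic_setsU.
Qed.

Lemma indic_sets_null N : measurable N -> mu N = 0%E -> indic_sets N.
Proof.
move=> mN N0; split => //; apply: (sublattice_ae (vsubspace0 sublattice_vsubspace)).
  exact: measurable_indic.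
exists N; split => // x /= Nx; apply: contra_notP Nx => {}Nx.
by rewrite indicE memNset.
Qed.

Lemma indic_sets_ray f c : Y f -> indic_sets (f @^-1` `]c, +oo[).
Proof.
move=> Yf; have mf := ideal_measurable hX (sublattice_sub Yf).
have rayE x : (x \in f @^-1` `]c, +oo[) = (c < f x).
  by apply/idP/idP => [/set_mem|cfx]; rewrite ?mem_set //= in_itv /= andbT.
have mray : measurable (f @^-1` `]c, +oo[) by rewrite -[E in measurable E]setTI; exact: mf.
split => //; pose s n x := Num.min (n%:R * Num.max (f x - c) 0) 1.
have Ys n : Y (s n).
  apply: (vsubspace_min sublattice_vsubspace sublattice_abs _ Y1).
  apply: (vsubspaceZ sublattice_vsubspace).
  apply: (vsubspace_max sublattice_vsubspace sublattice_abs);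
    last exact: vsubspace0 sublattice_vsubspace.
  exact: (vsubspaceB sublattice_vsubspace Yf (vsubspace_cst sublattice_vsubspace c Y1)).
apply: (order_closed_nondecreasing_limit hX sublattice_sub Yoc Ys).
- exact: X_indic.
- move=> x n m nm; apply: le_min2 => //; apply: ler_wpM2r; last by rewrite ler_nat.
  by rewrite le_max lexx orbT.
move=> x; apply: cvg_near_cst; rewrite indicE rayE.
have [cfx|fxc] := ltP c (f x); last first.
  by apply: nearW => n; rewrite /s max_r ?subr_le0 // mulr0 min_l.
near=> n; rewrite /s max_l ?subr_ge0 ?ltW // min_r //.
rewrite -ler_pdivrMr ?subr_gt0 // div1r; near: n; exact: nbhs_infty_ger.
Unshelve. all: by end_near.
Qed.

Lemma indic_sets_preimage f (B : set R) : Y f -> measurable B -> indic_sets (f @^-1` B).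
Proof.
move=> Yf; rewrite [E in E B -> _]RGenOInfty.measurableE => mB.
suff : [set B | indic_sets (f @^-1` B)] B by [].
apply: (smallest_sub _ _ mB); last by move=> _ [c ->]; exact: indic_sets_ray.
split=> [|A|F]; first by rewrite /= preimage_set0; exact: indic_sets0.
  by rewrite /= !setTD -preimage_setC -setTD; exact: indic_setsC.
by rewrite /= preimage_bigcup; case: indic_sets_sigma_algebra => _ _; apply.
Qed.

Lemma sigmaY_sub_indic_sets : sigmaY mu Y `<=` indic_sets.
Proof.
apply: smallest_sub; first exact: indic_sets_sigma_algebra.
move=> A [[f [B [Yf [mB ->]]]]|[mN N0]]; first exact: indic_sets_preimage.
exact: indic_sets_null.
Qed.

End indicator_sets.

Lemma L0_ofP {d : measure_display} {T : measurableType d} {R : realType}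
  (G : set (set T)) (f : T -> R) :
  L0_of <<s G >> f <->
  measurable_fun setT f /\ measurable_fun (setT : set (g_sigma_algebraType G)) f.
Proof.
split=> -[mf mGf]; split=> //.
  by move=> _ B mB; rewrite setTI; exact: mGf.
by move=> B mB; rewrite -[E in <<s G >> E]setTI; exact: mGf.
Qed.

Section order_closed_L0.
Context {d : measure_display} {T : measurableType d} {R : realType}.
Variables (mu : probability T R) (X Y : set (T -> R)).
Hypotheses (hX : ideal mu X) (hY : sublattice mu X Y) (Y1 : Y (fun _ => 1)).
Hypothesis Yoc : order_closed mu X Y.
Implicit Types f : T -> R.

Definition sigmaY_gens : set (set T) :=
  [set A | exists f (B : set R), Y f /\ measurable B /\ A = f @^-1` B] `|`
  [set N | measurable N /\ mu N = 0%E].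

(* [sigmaY mu Y] unfolds to [<<s sigmaY_gens >>], the measurable sets of [TY]. *)
Local Notation TY := (g_sigma_algebraType sigmaY_gens).

Lemma sfun_sigmaY_in (g : {sfun TY >-> R}) : Y g.
Proof.
have YV := sublattice_vsubspace hY.
change (Y (fun x => g x)); under eq_fun do rewrite fimfunEord.
apply: (vsubspace_sum YV) => i; apply: (vsubspaceZ YV).
apply: (sigmaY_sub_indic_sets hX hY Y1 Yoc _).2.
exact: (measurable_funPTI g (measurable_set1 _)).
Qed.

Lemma L0_sigmaY_ge0_in f : L0_of (sigmaY mu Y) f -> X f -> (forall x, 0 <= f x) -> Y f.
Proof.
move=> /L0_ofP[_ mf] Xf f0.
have mEf : measurable_fun (setT : set TY) (EFin \o f) by exact/measurable_EFinP.
have f0E (x : TY) : setT x -> (0 <= (EFin \o f) x)%E by rewrite /= lee_fin.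
apply: (order_closed_nondecreasing_limit hX (sublattice_sub hY) Yoc
  (s := approx (T := TY) setT (EFin \o f))) => //.
- by move=> n; rewrite -(nnsfun_approxE measurableT mEf); exact: sfun_sigmaY_in.
- by move=> x n m nm; have /lefP := nd_approx (T := TY) setT (EFin \o f) nm; apply.
- by move=> x; exact: (cvg_approx f0E Logic.I (ltry _)).
Qed.

Lemma order_closed_L0_eq : Y = L0_of (sigmaY mu Y) `&` X.
Proof.
apply/seteqP; split=> [f Yf|f [/L0_ofP[mf mGf] Xf]].
  split; [split|exact: (sublattice_sub hY Yf)].
  - exact: (ideal_measurable hX (sublattice_sub hY Yf)).
  - by move=> B mB; apply: sub_sigma_algebra; left; exists f, B.
have Ydom (g : T -> R) : measurable_fun setT g -> measurable_fun (setT : set TY) g ->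
    (forall x, `|g x| <= `|f x|) -> (forall x, 0 <= g x) -> Y g.
  move=> mg mGg gf g0; apply: L0_sigmaY_ge0_in => //; first exact/L0_ofP.
  exact: (ideal_le hX mg Xf gf).
have norm_le (r : R) : `|Num.max r 0| <= `|r|.
  by case: (leP r 0) => _; rewrite ?normr0 ?normr_ge0.
have Ypos : Y f^\+.
  apply: Ydom; [exact: measurable_funrpos|exact: measurable_funrpos| |exact: funrpos_ge0].
  by move=> x; exact: norm_le.
have Yneg : Y f^\-.
  apply: Ydom; [exact: measurable_funrneg|exact: measurable_funrneg| |exact: funrneg_ge0].
  by move=> x; rewrite -(normrN (f x)); exact: norm_le.
have := vsubspaceB (sublattice_vsubspace hY) Ypos Yneg.
by congr Y; rewrite -[RHS](funrposBneg f).
Qed.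

End order_closed_L0.

Lemma directed_antitone_cvg_inf (R : realType) (J : Type) (leJ : J -> J -> Prop)
  (Phi : J -> R) :
  directed leJ -> (forall b b', leJ b b' -> Phi b' <= Phi b) ->
  has_lbound (range Phi) ->
  exists c : nat -> J, (forall n m, (n <= m)%N -> leJ (c n) (c m)) /\
    Phi (c n) @[n --> \oo] --> inf (range Phi).
Proof.
move=> [[j0] [le_refl [le_trans le_ub]]] Phi_anti Phi_lb.
have [ub ub_ge] := choice (fun p : J * J => le_ub p.1 p.2).
have Phi_inf : has_inf (range Phi) by split=> //; exists (Phi j0), j0.
have bs_ex n : exists b, Phi b < inf (range Phi) + harmonic n.
  by have [_ [b _ <-]] := inf_adherent (harmonic_gt0 n) Phi_inf; exists b.
have [bs bs_lt] := choice bs_ex.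
pose c := fix c n := if n is n'.+1 then ub (c n', bs n) else bs 0%N.
have c_bs n : leJ (bs n) (c n).
  by case: n => [|n]; [exact: le_refl|exact: (ub_ge (c n, bs n.+1)).2].
have c_nd n m : (n <= m)%N -> leJ (c n) (c m).
  elim: m => [|m IH]; first by rewrite leqn0 => /eqP->.
  rewrite leq_eqVlt => /orP[/eqP->|/IH cnm]; first exact: le_refl.
  exact: le_trans cnm (ub_ge (c m, bs m.+1)).1.
exists c; split=> //.
apply: (@squeeze_cvgr _ _ _ _ (fun=> inf (range Phi))
                     (fun n => inf (range Phi) + harmonic n)).
- apply: nearW => n; apply/andP; split; first by apply: ge_inf => //; exists (c n).
  exact/ltW/(le_lt_trans (Phi_anti _ _ (c_bs n))).
- exact: cvg_cst.
- by rewrite -[E in _ --> E]addr0; apply: cvgD; [exact: cvg_cst|exact: cvg_harmonic].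
Qed.

Lemma ge0_integral_small_ae_eq0 {d : measure_display} {T : measurableType d}
  {R : realType} (mu : measure T R) (k : T -> R) :
  measurable_fun setT k -> (forall x, 0 <= k x) ->
  (forall e, 0 < e -> (\int[mu]_x (k x)%:E <= e%:E)%E) ->
  {ae mu, forall x, k x = 0}.
Proof.
move=> mk k0 k_small.
have int0 : (\int[mu]_x `|(k x)%:E| = 0)%E.
  under eq_integral do rewrite gee0_abs ?lee_fin //.
  apply/eqP; rewrite eq_le integral_ge0 ?andbT; last by move=> x _; rewrite lee_fin.
  by apply/lee_addgt0Pr => e e0; rewrite add0e; exact: k_small.
have mEk : measurable_fun setT (EFin \o k) by exact/measurable_EFinP.
move/(ae_eq_integral_abs mu measurableT mEk) : int0.
by apply: filterS => x /(_ Logic.I) [].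
Qed.

Lemma ge0_ae_le_integral_EFin {d : measure_display} {T : measurableType d}
  {R : realType} (mu : measure T R) (f g : T -> R) :
  measurable_fun setT f -> measurable_fun setT g ->
  (forall x, 0 <= f x) -> (forall x, 0 <= g x) -> {ae mu, forall x, f x <= g x} ->
  (\int[mu]_x (f x)%:E <= \int[mu]_x (g x)%:E)%E.
Proof.
move=> mf mg f0 g0 fg; apply: ae_ge0_le_integral => //.
- by move=> x _; rewrite lee_fin.
- exact/measurable_EFinP.
- by move=> x _; rewrite lee_fin.
- exact/measurable_EFinP.
- by apply: filterS fg => x fgx _; rewrite lee_fin.
Qed.

Section decreasing_to_zero.
Context {d : measure_display} {T : measurableType d} {R : realType}.
Variables (mu : probability T R) (X : set (T -> R)).
Hypotheses (hX : ideal mu X) (X1 : X (fun _ => 1)).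
Variables (J : Type) (leJ : J -> J -> Prop) (z : J -> T -> R).
Hypotheses (leJ_directed : directed leJ) (Xz : forall b, X (z b)).
Hypothesis z_decr : decr_to_zero mu X leJ z.

Let h b x := Num.min (Num.max (z b x) 0) 1.

Let h_ge0 b x : 0 <= h b x.
Proof. by rewrite le_min ler01 le_max lexx orbT. Qed.

Let h_le1 b x : h b x <= 1.
Proof. by rewrite ge_min lexx orbT. Qed.

Let measurable_h b : measurable_fun setT (h b).
Proof.
apply: measurable_minr (measurable_cst _).
exact: measurable_maxr (ideal_measurable hX (Xz b)) (measurable_cst _).
Qed.

Let h_antitone b b' : leJ b b' -> {ae mu, forall x, h b' x <= h b x}.
Proof.
case: z_decr => z_anti _ /z_anti; apply: filterS => x zbb'.
by apply: le_min2 => //; exact: le_max2.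
Qed.

Let Phi b := fine (\int[mu]_x (h b x)%:E).

Let integral_hE b : (\int[mu]_x (h b x)%:E = (Phi b)%:E)%E.
Proof.
rewrite fineK // ge0_fin_numE ?integral_ge0 // => [|x _]; last by rewrite lee_fin.
apply: (le_lt_trans _ (ltry 1)); apply: le_trans (probability_le1 mu measurableT).
rewrite -[leRHS]mul1e -integral_cst //.
apply: (@ge0_ae_le_integral_EFin _ _ _ _ _ (fun=> 1)) => //; exact: aeW.
Qed.

Let Phi_antitone b b' : leJ b b' -> Phi b' <= Phi b.
Proof.
move=> bb'; rewrite -lee_fin -!integral_hE.
exact: ge0_ae_le_integral_EFin (h_antitone bb').
Qed.

Let Phi_lbound : has_lbound (range Phi).
Proof.
exists 0 => _ [b _ <-]; rewrite -lee_fin -integral_hE.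
by apply: integral_ge0 => x _; rewrite lee_fin.
Qed.

Section along_subsequence.
Variable c : nat -> J.
Hypothesis c_nd : forall n m, (n <= m)%N -> leJ (c n) (c m).
Hypothesis Phi_c : Phi (c n) @[n --> \oo] --> inf (range Phi).

Let v x := infs (fun n => h (c n) x) 0.

Let range_hc x : sdrop (fun n => h (c n) x) 0 = range (fun n => h (c n) x).
Proof. by apply/seteqP; split=> _ [n _ <-]; exists n. Qed.

Let hc_lbound x : has_lbound (range (fun n => h (c n) x)).
Proof. by exists 0 => _ [n _ <-]. Qed.

Let v_le n x : v x <= h (c n) x.
Proof. by rewrite /v /infs /= range_hc; apply: ge_inf => //; exists n. Qed.

Let v_ge0 x : 0 <= v x.
Proof.
rewrite /v /infs /= range_hc; apply: lb_le_inf; first by exists (h (c 0%N) x), 0%N.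
by move=> _ [n _ <-].
Qed.

Let measurable_v : measurable_fun setT v.
Proof. exact: measurable_fun_infs. Qed.

Let v_le_h b : {ae mu, forall x, v x <= h b x}.
Proof.
pose k x := Num.max (v x - h b x) 0.
have mk : measurable_fun setT k.
  by apply: measurable_maxr (measurable_cst _); exact: measurable_funB.
have k0 x : 0 <= k x by rewrite le_max lexx orbT.
apply: (filterS _ (ge0_integral_small_ae_eq0 mk k0 _)) => [x kx0|e e0].
  by rewrite -subr_le0 -kx0 le_max lexx.
move/(@cvgrPdist_lt _ R^o) : Phi_c => /(_ e e0) [n _ /(_ n (leqnn n)) /=].
rewrite distrC ger0_norm ?subr_ge0 => [Phi_cn|]; last by apply: ge_inf => //; exists (c n).
case: leJ_directed => _ [_ [_ /(_ (c n) b) [b' [cnb' bb']]]].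
(* (v - h b)^+ + h b' <= h (c n), so the integral of (v - h b)^+ is at most
   Phi (c n) - Phi b' <= Phi (c n) - inf Phi < e. *)
have ineq : {ae mu, forall x, k x + h b' x <= h (c n) x}.
  apply: filterS (filterI (h_antitone cnb') (h_antitone bb')) => x [hcn hb].
  rewrite /k; have := v_le n x.
  by case: (leP (v x - h b x) 0) => _; rewrite ?(max_r, max_l) //; lra.
have int_k : (\int[mu]_x (k x)%:E + (Phi b')%:E <= (Phi (c n))%:E)%E.
  rewrite -!integral_hE -ge0_integralD //; first last.
  - exact/measurable_EFinP.
  - by move=> x _; rewrite lee_fin.
  - exact/measurable_EFinP.
  - by move=> x _; rewrite lee_fin.
  under eq_integral do rewrite -EFinD.
  apply: ge0_ae_le_integral_EFin ineq => //; first exact: measurable_funD.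
  by move=> x; rewrite addr_ge0.
apply: (@le_trans _ _ (Phi (c n) - Phi b')%:E); first by rewrite EFinB leeBrDr.
have : inf (range Phi) <= Phi b' by apply: ge_inf => //; exists b'.
by rewrite lee_fin; lra.
Qed.

Let v_ae0 : {ae mu, forall x, v x = 0}.
Proof.
case: z_decr => _ [z_ge0 z_inf].
have Xv : X v.
  apply: (ideal_le hX measurable_v X1) => x.
  by rewrite normr1 ger0_norm // (le_trans (v_le 0 x)).
have v_le_z b : ae_le mu v (z b).
  apply: filterS (filterI (v_le_h b) (z_ge0 b)) => x [vh zb0].
  by apply: (le_trans vh); rewrite /h ge_min max_l ?lexx.
apply: filterS (z_inf v Xv v_le_z) => x vx0.
by apply/eqP; rewrite eq_le vx0 v_ge0.
Qed.

Let z_lt_of_h_lt b x e : e <= 1 -> h b x < e -> z b x < e.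
Proof.
move=> e1 hbe; have [zb0|zb0] := leP (z b x) 0.
  exact: le_lt_trans zb0 (le_lt_trans (h_ge0 b x) hbe).
move: hbe; rewrite /h max_l ?ltW //; have [//|_] := leP (z b x) 1.
by move=> /(le_lt_trans e1); rewrite ltxx.
Qed.

Lemma cvg_decr_to_zero_subseq : {ae mu, forall x, z (c n) x @[n --> \oo] --> 0}.
Proof.
case: z_decr => z_anti [z_ge0 _].
have zc_anti : {ae mu, forall x n m, (n <= m)%N -> z (c m) x <= z (c n) x}.
  apply: ae_foralln => n; apply: ae_foralln => m.
  have [nm|mn] := leqP n m; last exact: aeW.
  by apply: filterS (z_anti _ _ (c_nd nm)) => x zx _.
have zc_ge0 := ae_foralln (fun n => z_ge0 (c n)).
apply: filterS (filterI v_ae0 (filterI zc_anti zc_ge0)) => x [vx0 [zx_anti zx_ge0]].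
apply/(@cvgrPdist_lt _ R^o) => e e0.
have e1_gt0 : 0 < Num.min e 1 by rewrite lt_min e0 ltr01.
have hc_inf : has_inf (range (fun n => h (c n) x)).
  by split; [exists (h (c 0%N) x), 0%N|exact: hc_lbound].
have [_ [n _ <-]] := inf_adherent e1_gt0 hc_inf.
have -> : inf (range (fun n => h (c n) x)) = v x by rewrite /v /infs /= range_hc.
rewrite vx0 add0r => /z_lt_of_h_lt.
rewrite ge_min lexx orbT => /(_ isT) zn_lt.
near=> m; rewrite sub0r normrN ger0_norm //.
apply: le_lt_trans (zx_anti n m _) (lt_le_trans zn_lt _); last by rewrite ge_min lexx.
by near: m; exact: nbhs_infty_ge.
Unshelve. all: by end_near.
Qed.

End along_subsequence.

Lemma decr_to_zero_subseq :
  exists c : nat -> J, (forall n m, (n <= m)%N -> leJ (c n) (c m)) /\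
    {ae mu, forall x, z (c n) x @[n --> \oo] --> 0}.
Proof.
have [c [c_nd Phi_c]] := directed_antitone_cvg_inf leJ_directed Phi_antitone Phi_lbound.
by exists c; split; last exact: cvg_decr_to_zero_subseq.
Qed.

End decreasing_to_zero.

Lemma L0_of_ae_cvg {d : measure_display} {T : measurableType d} {R : realType}
  (mu : measure T R) (G : set (set T)) (f : nat -> T -> R) (g : T -> R) :
  [set N | measurable N /\ mu N = 0%E] `<=` G -> measurable_fun setT g ->
  (forall n, L0_of <<s G >> (f n)) ->
  {ae mu, forall x, f n x @[n --> \oo] --> g x} -> L0_of <<s G >> g.
Proof.
move=> nullG mg Lf [N [mN N0 fgN]]; apply/L0_ofP; split=> // _ B mB.
have GN : <<s G >> N by apply: sub_sigma_algebra; exact: nullG.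
have mgB : measurable (g @^-1` B) by rewrite -[E in measurable E]setTI; exact: mg.
have mgNC : measurable_fun (~` N : set (g_sigma_algebraType G)) g.
  apply: measurable_fun_cvg => [n|x Nx].
    have [_ mGfn] := (L0_ofP G (f n)).1 (Lf n).
    exact: measurable_funS mGfn.
  by apply: contra_notP Nx => fgx; exact: fgN.
have -> : [set: g_sigma_algebraType G] `&` g @^-1` B =
    (N `&` g @^-1` B) `|` (~` N `&` g @^-1` B) by rewrite -setIUl setUv.
apply: (@measurableU _ (g_sigma_algebraType G)).
  apply: sub_sigma_algebra; apply: nullG; split; first exact: measurableI.
  apply/eqP; rewrite -measure_le0 -N0.
  by apply: le_measure; rewrite ?inE //; exact: measurableI.
exact: (mgNC (@measurableC _ (g_sigma_algebraType G) _ GN) B mB).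
Qed.

Lemma L0_eq_order_closed {d : measure_display} {T : measurableType d} {R : realType}
  (mu : probability T R) (X Y : set (T -> R)) :
  ideal mu X -> sublattice mu X Y -> Y (fun _ => 1) ->
  Y = L0_of (sigmaY mu Y) `&` X -> order_closed mu X Y.
Proof.
move=> hX hY Y1 Y_L0 I leI xn x0 [_ [leI_refl _]] Yxn Xx0.
move=> [J [leJ [z [leJ_directed [Xz [z_decr xn_conv]]]]]].
have [c [_ zc_cvg]] := decr_to_zero_subseq hX (sublattice_sub hY Y1) leJ_directed Xz z_decr.
have [a xn_le] := choice xn_conv.
pose y n := xn (a (c n)).
have y_le : {ae mu, forall x n, `|y n x - x0 x| <= z (c n) x}.
  by apply: ae_foralln => n; exact: (xn_le (c n) _ (leI_refl _)).
rewrite Y_L0; split=> //.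
apply: (L0_of_ae_cvg (mu := mu) (f := y) _ (ideal_measurable hX Xx0)) => [N nullN|n|].
- by right.
- by have := Yxn (a (c n)); rewrite {1}Y_L0 => -[].
apply: filterS (filterI y_le zc_cvg) => x [yx_le /(@cvgrPdist_lt _ R^o) zcx].
apply/(@cvgrPdist_lt _ R^o) => e /zcx; apply: filterS => n.
rewrite sub0r normrN distrC; exact: le_lt_trans (le_trans (yx_le n) (ler_norm _)).
Qed.

Theorem lemma2p2 (d : measure_display) (T : measurableType d) (R : realType)
  (mu : probability T R) (X Y : set (T -> R)) :
  ideal mu X -> sublattice mu X Y -> Y (fun _ => 1) ->
  (order_closed mu X Y <-> Y = L0_of (sigmaY mu Y) `&` X).
Proof.
move=> hX hY Y1; split; first exact: order_closed_L0_eq.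
exact: L0_eq_order_closed.
Qed.
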